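(* Let $\mathcal{K}$ be a pointed closed convex cone in a finite-dimensional Euclidean space. Then for any face $\mathcal{F}$ of $\mathcal{K}$ with $\dim\mathcal{F}>1$ there exists $\beta>0$ such that for every $x\in\operatorname{span}\mathcal{F}$ and every $$y\in\operatorname*{Argmax}_{u\in\mathcal{F},\ \|u\|=1}\langle x,u\rangle$$ we have $$\operatorname{dist}(x+ty,\mathcal{K})\le\operatorname{dist}(x,\mathcal{K})\quad\text{and}\quad\operatorname{dist}(x,\mathcal{F})\le\beta\operatorname{dist}(x+ty,\mathcal{F})\quad\text{for all }t\ge0.$$
   Context: Pointed means $\mathcal{K}\cap(-\mathcal{K})=\{0\}$. A face of $\mathcal{K}$ is a closed convex subset $\mathcal{F}\subseteq\mathcal{K}$ such that whenever $x,y\in\mathcal{K}$ and $\alpha x+(1-\alpha)y\in\mathcal{F}$ for some $\alpha\in(0,1)$, then $x,y\in\mathcal{F}$. *)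

(* Ambient space: R^n realized as row vectors 'rV[R]_n, with the standard
   Euclidean inner product and norm (defined below; the library's default
   norm on matrices is the sup norm, so we define the Euclidean one). *)
From HB Require Import structures.
From mathcomp Require Import all_boot all_order all_algebra.
From mathcomp Require Import all_classical all_reals all_analysis.
Set Implicit Arguments. Unset Strict Implicit. Unset Printing Implicit Defensive.
Import Order.TTheory GRing.Theory Num.Theory.
Import numFieldNormedType.Exports.
Local Open Scope classical_set_scope.
Local Open Scope ring_scope.

Section Defs.
Context {R : realType} {n : nat}.
Notation V := 'rV[R]_n.

Definition dotp (u v : V) : R := \sum_(i < n) u ord0 i * v ord0 i.
Definition enorm (u : V) : R := Num.sqrt (dotp u u).

Definition dist (x : V) (A : set V) : R := inf [set enorm (x - a) | a in A].

Definition convex_set (A : set V) : Prop :=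
  forall x y (a : R), A x -> A y -> 0 <= a -> a <= 1 -> A (a *: x + (1 - a) *: y).

Definition is_cone (A : set V) : Prop :=
  forall x (t : R), A x -> 0 <= t -> A (t *: x).

Definition pointed (K : set V) : Prop :=
  [set x | K x /\ K (- x)] = [set 0].

Definition is_face (K F : set V) : Prop :=
  [/\ closed F, convex_set F, F `<=` K &
   forall x y (a : R), K x -> K y -> 0 < a -> a < 1 ->
     F (a *: x + (1 - a) *: y) -> F x /\ F y].

Definition linspan F : set V :=
  [set x | exists s : seq V, (forall v, v \in s -> F v) /\ x \in (span s)%VS].

(* dim F = d : the linear span of F has dimension d, i.e. d is the maximal
   dimension of the span of a finite family of elements of F. *)
Definition has_dim F (d : nat) : Prop :=
  (exists s : seq V, (forall v, v \in s -> F v) /\ \dim (span s)%VS = d) /\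
  (forall s : seq V, (forall v, v \in s -> F v) -> (\dim (span s)%VS <= d)%N).

Definition argmax_unit F (x : V) : set V :=
  [set y | [/\ F y, enorm y = 1 &
            forall u, F u -> enorm u = 1 -> dotp x u <= dotp x y]].

End Defs.

(* Let m = <x, y>.  Since y lies in F, hence in the convex cone K, translating
   by t y maps K into itself and cannot increase the distance to K.
   The unit vector y maximizes <x, u> - m |u| over the convex cone F, so
   first-order optimality gives the polar inequality <x, f> <= m <y, f> on F.
   Hence x - m y, which is orthogonal to y, is no longer than x + t y - f for
   any f in F: |x - m y| <= dist (x + t y, F).  Conversely, if m > 0 then
   m y lies in F and dist (x, F) <= |x - m y|; if m <= 0, two distinct unit
   vectors u1, u2 of F (they exist since dim F > 1) satisfy <x, u_i> <= m <= 0,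
   which forces |u1 - u2|^2 |x|^2 <= 4 |x - m y|^2.  So beta = 4 / |u1 - u2|^2
   works. *)

From Pilot Require Import Defs.
From HB Require Import structures.
From mathcomp Require Import all_boot all_order all_algebra.
From mathcomp Require Import all_classical all_reals all_analysis.
From mathcomp Require Import ring lra.
Import Order.TTheory GRing.Theory Num.Theory.
Import numFieldNormedType.Exports.
Local Open Scope classical_set_scope.
Local Open Scope ring_scope.
Set Implicit Arguments. Unset Strict Implicit.

Section Euclidean.
Variables (R : realType) (n : nat).
Implicit Types u v w x y : 'rV[R]_n.

Lemma dotpC u v : dotp u v = dotp v u.
Proof. by apply: eq_bigr => i _; rewrite mulrC. Qed.

Lemma dotpDl u v w : dotp (u + v) w = dotp u w + dotp v w.
Proof. by rewrite /dotp -big_split; apply: eq_bigr => i _; rewrite mxE mulrDl. Qed.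

Lemma dotpZl (a : R) u w : dotp (a *: u) w = a * dotp u w.
Proof. by rewrite /dotp mulr_sumr; apply: eq_bigr => i _; rewrite mxE mulrA. Qed.

Lemma dotpNl u w : dotp (- u) w = - dotp u w.
Proof. by rewrite -scaleN1r dotpZl mulN1r. Qed.

Lemma dotpBl u v w : dotp (u - v) w = dotp u w - dotp v w.
Proof. by rewrite dotpDl dotpNl. Qed.

Lemma dotpDr u v w : dotp w (u + v) = dotp w u + dotp w v.
Proof. by rewrite dotpC dotpDl !(dotpC w). Qed.

Lemma dotpZr (a : R) u w : dotp w (a *: u) = a * dotp w u.
Proof. by rewrite dotpC dotpZl dotpC. Qed.

Lemma dotpNr u w : dotp w (- u) = - dotp w u.
Proof. by rewrite dotpC dotpNl dotpC. Qed.

Lemma dotpBr u v w : dotp w (u - v) = dotp w u - dotp w v.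
Proof. by rewrite dotpDr dotpNr. Qed.

Lemma dotp0r w : dotp w 0 = 0.
Proof. by rewrite -(scale0r 0) dotpZr mul0r. Qed.

Definition dotpE := (dotpBl, dotpBr, dotpDl, dotpDr, dotpNl, dotpNr, dotpZl, dotpZr).

Lemma dotpp_ge0 u : 0 <= dotp u u.
Proof. by apply: sumr_ge0 => i _; rewrite -expr2 sqr_ge0. Qed.

Lemma dotpp_eq0 u : (dotp u u == 0) = (u == 0).
Proof.
apply/idP/eqP => [|->]; last by rewrite dotp0r.
rewrite psumr_eq0 => [/allP u0|i _]; last by rewrite -expr2 sqr_ge0.
apply/rowP => j; rewrite mxE.
by have /implyP/(_ isT) := u0 j (mem_index_enum j); rewrite mulf_eq0 orbb => /eqP.
Qed.

Lemma enorm_ge0 u : 0 <= enorm u.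
Proof. exact: sqrtr_ge0. Qed.

Lemma enorm_sqr u : enorm u ^+ 2 = dotp u u.
Proof. by rewrite /enorm sqr_sqrtr // dotpp_ge0. Qed.

Lemma enorm1_dotpp u : enorm u = 1 -> dotp u u = 1.
Proof. by move=> u1; rewrite -enorm_sqr u1 expr1n. Qed.

Lemma enorm_eq0 u : (enorm u == 0) = (u == 0).
Proof. by rewrite -dotpp_eq0 -enorm_sqr sqrf_eq0. Qed.

Lemma enorm0 : enorm (0 : 'rV[R]_n) = 0.
Proof. by apply/eqP; rewrite enorm_eq0. Qed.

Lemma enormZ (a : R) u : enorm (a *: u) = `|a| * enorm u.
Proof. by rewrite /enorm dotpZl dotpZr mulrA -expr2 sqrtrM ?sqr_ge0 // sqrtr_sqr. Qed.

Lemma enormN u : enorm (- u) = enorm u.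
Proof. by rewrite -scaleN1r enormZ normrN1 mul1r. Qed.

Lemma enorm_normalize u : u != 0 -> enorm ((enorm u)^-1 *: u) = 1.
Proof.
by rewrite -enorm_eq0 => u0; rewrite enormZ ger0_norm ?invr_ge0 ?enorm_ge0 ?mulVf.
Qed.

Lemma cauchy_schwarz u v : dotp u v <= enorm u * enorm v.
Proof.
have [->|u0] := eqVneq u 0; first by rewrite dotpC dotp0r mulr_ge0 ?enorm_ge0.
have [->|v0] := eqVneq v 0; first by rewrite dotp0r mulr_ge0 ?enorm_ge0.
have uv_gt0 : 0 < enorm u * enorm v.
  by rewrite mulr_gt0 // lt_def enorm_ge0 enorm_eq0 ?u0 ?v0.
have := dotpp_ge0 (enorm v *: u - enorm u *: v).
rewrite !dotpE -!enorm_sqr (dotpC v u); nra.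
Qed.

Lemma enorm_sub_proj x y : enorm y = 1 ->
  enorm (x - dotp x y *: y) ^+ 2 = enorm x ^+ 2 - dotp x y ^+ 2.
Proof.
move=> y1; rewrite !enorm_sqr !dotpE -(enorm_sqr y) y1 (dotpC y x); ring.
Qed.

End Euclidean.

Section ConvexCone.
Variables (R : realType) (n : nat).
Implicit Types (A : set 'rV[R]_n) (a b : 'rV[R]_n).

Lemma convex_set_comb A : convex.convex_set A -> Defs.convex_set A.
Proof.
move=> Acvx x y a Ax Ay a0 a1.
by have /set_mem := Acvx x y (Itv01 a0 a1) (mem_set Ax) (mem_set Ay).
Qed.

Lemma onem_half : 1 - 2^-1 = 2^-1 :> R.
Proof. by rewrite {1}(splitr 1) mul1r addrK. Qed.

Lemma half_comb_scale2 a b : 2 *: (2^-1 *: a + (1 - 2^-1) *: b) = a + b :> 'rV[R]_n.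
Proof.
by rewrite onem_half scalerDr !scalerA mulfV ?pnatr_eq0 // !scale1r.
Qed.

Lemma convex_cone_addr_closed A a b :
  Defs.convex_set A -> is_cone A -> A a -> A b -> A (a + b).
Proof.
move=> Acvx Acone Aa Ab; rewrite -half_comb_scale2.
by apply: Acone; [apply: Acvx; rewrite ?invr_ge0 ?invf_le1 ?ler0n ?ler1n|rewrite ler0n].
Qed.

Section Face.
Variables K F : set 'rV[R]_n.
Hypotheses (Kcone : is_cone K) (KF : is_face K F).

Lemma face_sub : F `<=` K.
Proof. by case: KF. Qed.

Lemma face0 z : F z -> F 0.
Proof.
(* [z] is the midpoint of [0] and [2 z] *)
move=> Fz; have [_ _ _ Fext] := KF.
have K2z : K (2 *: z) by apply: Kcone; [apply: face_sub|rewrite ler0n].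
have K0 : K 0 by rewrite -(scale0r z); apply: Kcone; [apply: face_sub|].
have half_gt0 : 0 < 2^-1 :> R by rewrite invr_gt0 ltr0n.
have half_lt1 : 2^-1 < 1 :> R by rewrite invf_lt1 ?ltr0n ?ltr1n.
suff [] : F 0 /\ F (2 *: z) by [].
apply: Fext half_gt0 half_lt1 _ => //.
by rewrite scaler0 add0r scalerA onem_half mulVf ?pnatr_eq0 // scale1r.
Qed.

Lemma face_cone : is_cone F.
Proof.
move=> z t Fz t0; have [_ Fcvx _ Fext] := KF; have F0 := face0 Fz.
have [t1|t1] := lerP t 1.
  by have := Fcvx _ _ _ Fz F0 t0 t1; rewrite scaler0 addr0.
(* [z] lies strictly between [0] and [t z] *)
have t_gt0 : 0 < t by apply: lt_trans t1.
have Ktz : K (t *: z) by apply: Kcone; [apply: face_sub|apply: ltW].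
have := Fext (t *: z) 0 t^-1 Ktz (face_sub F0).
rewrite invr_gt0 t_gt0 invf_lt1 // scaler0 addr0 scalerA mulVf ?gt_eqF // scale1r.
by case/(_ isT t1 Fz).
Qed.

End Face.
End ConvexCone.

Lemma le0_of_le_linear (R : realFieldType) (d c : R) :
  (forall s, 0 < s -> d <= c * s) -> d <= 0.
Proof.
move=> dle; apply/ler_addgt0Pr => e e0; rewrite add0r.
have k_gt0 : 0 < `|c| + 1 by rewrite ltr_wpDl.
have s_gt0 : 0 < e / (`|c| + 1) by rewrite divr_gt0.
apply: le_trans (dle _ s_gt0) _.
rewrite -[leRHS](mulfVK (lt0r_neq0 k_gt0)) mulrC ler_pM2l //.
by rewrite (le_trans (ler_norm c)) // lerDl.
Qed.

Section Distance.
Variables (R : realType) (n : nat).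
Implicit Types (A : set 'rV[R]_n) (a v x : 'rV[R]_n).

Lemma dist_le_enorm x A a : A a -> dist x A <= enorm (x - a).
Proof.
move=> Aa; apply: ge_inf; last by exists a.
by exists 0 => _ [b _ <-]; apply: enorm_ge0.
Qed.

Lemma le_dist x A c : A !=set0 -> (forall a, A a -> c <= enorm (x - a)) ->
  c <= dist x A.
Proof.
move=> [a Aa] cle; apply: lb_le_inf; first by exists (enorm (x - a)), a.
by move=> _ [b Ab <-]; apply: cle.
Qed.

Lemma dist_addr_le x v A : A !=set0 -> (forall a, A a -> A (a + v)) ->
  dist (x + v) A <= dist x A.
Proof.
move=> A0 Av; apply: le_dist => // a Aa.
by apply: le_trans (dist_le_enorm _ (Av a Aa)) _; rewrite opprD addrACA subrr addr0.
Qed.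

End Distance.

Section Argmax.
Variables (R : realType) (n : nat) (F : set 'rV[R]_n).
Hypotheses (Fcone : is_cone F) (Fcvx : Defs.convex_set F).
Implicit Types (f u x y : 'rV[R]_n).

Lemma argmax_le x y u : argmax_unit F x y -> F u -> dotp x u <= dotp x y * enorm u.
Proof.
case=> _ _ ymax Fu; have [->|u0] := eqVneq u 0.
  by rewrite dotp0r enorm0 mulr0.
have u_gt0 : 0 < enorm u by rewrite lt_def enorm_eq0 u0 enorm_ge0.
have iu_ge0 : 0 <= (enorm u)^-1 by rewrite invr_ge0 enorm_ge0.
have := ymax _ (Fcone Fu iu_ge0) (enorm_normalize u0).
by rewrite dotpZr -(ler_pM2r u_gt0) mulrAC mulVf ?mul1r ?lt0r_neq0.
Qed.

Lemma argmax_polar x y f : argmax_unit F x y -> F f ->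
  dotp x f <= dotp x y * dotp y f.
Proof.
move=> xy Ff; have [Fy y1 _] := xy; have yy1 := enorm1_dotpp y1.
set m := dotp x y; set a := dotp y f; set b := dotp f f.
(* first-order optimality of [y] along the ray [y + s f] *)
have along s : 0 <= s -> m + s * dotp x f <= m * enorm (y + s *: f).
  move=> s0; have := argmax_le xy (convex_cone_addr_closed Fcvx Fcone Fy (Fcone Ff s0)).
  by rewrite dotpDr dotpZr.
have [m_le0|m_gt0] := lerP m 0.
  have := cauchy_schwarz (y + f) y; rewrite y1 mulr1 dotpDl yy1 (dotpC f y) -/a.
  have := along 1 ler01; rewrite scale1r mul1r; nra.
rewrite -subr_le0; apply: (@le0_of_le_linear _ _ (m * b / 2)) => s s_gt0.
have lb := along s (ltW s_gt0); set N := enorm (y + s *: f) in lb.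
have N_sqr : N ^+ 2 = 1 + 2 * s * a + s ^+ 2 * b.
  by rewrite enorm_sqr !dotpE yy1 (dotpC f y) -/a -/b; ring.
(* AM-GM bounds [N] by [(N^2 + 1) / 2], a quadratic in [s] *)
have amgm : N <= (N ^+ 2 + 1) / 2 by have := sqr_ge0 (N - 1); rewrite sqrrB; lra.
have ub : m * N <= m * ((N ^+ 2 + 1) / 2) by rewrite ler_pM2l.
rewrite N_sqr in ub; rewrite -(ler_pM2l s_gt0); lra.
Qed.

Lemma enorm_proj_le_dist x y t : argmax_unit F x y ->
  enorm (x - dotp x y *: y) <= dist (x + t *: y) F.
Proof.
move=> xy; have [Fy y1 _] := xy; apply: le_dist; first by exists y.
move=> f Ff; set m := dotp x y; set w := x - m *: y; set z := x + t *: y - f.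
(* [w] is orthogonal to [y], and the polar inequality makes [<f, w> <= 0] *)
have w_le : dotp w w <= dotp z w.
  have := argmax_polar xy Ff; rewrite /z /w !dotpE (enorm1_dotpp y1) (dotpC y x).
  rewrite (dotpC f x) (dotpC f y) -/m; lra.
have [->|w0] := eqVneq w 0; first by rewrite enorm0 enorm_ge0.
have w_gt0 : 0 < enorm w by rewrite lt_def enorm_eq0 w0 enorm_ge0.
rewrite -(ler_pM2r w_gt0) -expr2 enorm_sqr.
exact: le_trans w_le (cauchy_schwarz z w).
Qed.

End Argmax.

Section TwoUnits.
Variables (R : realType) (n : nat).
Implicit Types (F : set 'rV[R]_n) (u v x : 'rV[R]_n).

Lemma parallelogram u v :
  enorm (u + v) ^+ 2 + enorm (u - v) ^+ 2 = 2 * (enorm u ^+ 2 + enorm v ^+ 2).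
Proof. by rewrite !enorm_sqr !dotpE (dotpC v u); ring. Qed.

Lemma enorm_sqr_le_of_dotp_units u1 u2 x m :
  enorm u1 = 1 -> enorm u2 = 1 -> dotp x u1 <= m -> dotp x u2 <= m -> m <= 0 ->
  enorm (u1 - u2) ^+ 2 * enorm x ^+ 2 <= 4 * (enorm x ^+ 2 - m ^+ 2).
Proof.
move=> u1_1 u2_1 xu1 xu2 m_le0.
have := parallelogram u1 u2; rewrite u1_1 u2_1 expr1n.
have := cauchy_schwarz (- x) (u1 + u2); rewrite enormN dotpNl dotpDr.
set X := enorm x; set N := enorm (u1 + u2) => cs.
have X_ge0 : 0 <= X := enorm_ge0 x; have N_ge0 : 0 <= N := enorm_ge0 _.
have : (- 2 * m) ^+ 2 <= (X * N) ^+ 2 by rewrite ler_pXn2r ?nnegrE //; nra.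
rewrite exprMn; nra.
Qed.

Lemma cone_sub_line F u0 : is_cone F ->
  (forall u, F u -> enorm u = 1 -> u = u0) -> forall v, F v -> v \in <[u0]>%VS.
Proof.
move=> Fcone unit_u0 v Fv; have [->|v0] := eqVneq v 0; first by rewrite mem0v.
have iv_ge0 : 0 <= (enorm v)^-1 by rewrite invr_ge0 enorm_ge0.
have v_eq : v = enorm v *: ((enorm v)^-1 *: v).
  by rewrite scalerA mulfV ?scale1r // enorm_eq0.
by rewrite v_eq (unit_u0 _ (Fcone _ _ Fv iv_ge0) (enorm_normalize v0)) memvZ ?memv_line.
Qed.

Lemma cone_two_units F : is_cone F -> (exists d, has_dim F d /\ (1 < d)%N) ->
  exists u1 u2, [/\ F u1, F u2, enorm u1 = 1, enorm u2 = 1 & u1 != u2].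
Proof.
move=> Fcone [d [[[s [sF sd]] _] d_gt1]]; apply: contrapT => no_pair.
(* otherwise all unit vectors of [F] coincide (with [0] if there are none) *)
have [u0 unit_u0] : exists u0, forall u, F u -> enorm u = 1 -> u = u0.
  have [[u0 [Fu0 u0_1]]|no_unit] := pselect (exists u, F u /\ enorm u = 1).
    exists u0 => u Fu u1; apply/eqP; apply: contrapT => /negP uu0.
    by apply: no_pair; exists u, u0.
  by exists 0 => u Fu u1; exfalso; apply: no_unit; exists u.
have s_line : (span s <= <[u0]>)%VS.
  by apply/span_subvP => v /sF; apply: cone_sub_line.
have := dimvS s_line; rewrite dim_vline sd => /(leq_trans d_gt1).
by case: (u0 != 0).
Qed.

End TwoUnits.

Lemma dist_le_proj (R : realType) (n : nat) (F : set 'rV[R]_n) :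
  is_cone F -> (exists d, has_dim F d /\ (1 < d)%N) ->
  exists beta : R, 0 < beta /\ forall x y, argmax_unit F x y ->
    dist x F <= beta * enorm (x - dotp x y *: y).
Proof.
move=> Fcone /(cone_two_units Fcone) [u1 [u2 [Fu1 Fu2 u1_1 u2_1 u12]]].
set D := enorm (u1 - u2) ^+ 2.
have D_gt0 : 0 < D by rewrite exprn_gt0 // lt_def enorm_eq0 subr_eq0 u12 enorm_ge0.
have D_le4 : D <= 4.
  have := parallelogram u1 u2; rewrite u1_1 u2_1 expr1n -/D.
  have := sqr_ge0 (enorm (u1 + u2)); lra.
set beta := 4 / D.
have beta_ge1 : 1 <= beta by rewrite ler_pdivlMr // mul1r.
have betaD : beta * D = 4 by rewrite mulfVK ?lt0r_neq0.
exists beta; split; first by rewrite divr_gt0.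
move=> x y xy; have [Fy y1 ymax] := xy.
set m := dotp x y; set W := enorm (x - m *: y).
have W_ge0 : 0 <= W := enorm_ge0 _.
have [m_gt0|m_le0] := ltrP 0 m.
  apply: le_trans (dist_le_enorm x (Fcone _ _ Fy (ltW m_gt0))) _.
  by rewrite ler_peMl.
have F0 : F 0 by rewrite -(scale0r y); apply: Fcone.
apply: le_trans (dist_le_enorm x F0) _; rewrite subr0.
have := enorm_sqr_le_of_dotp_units u1_1 u2_1 (ymax _ Fu1 u1_1) (ymax _ Fu2 u2_1) m_le0.
rewrite -enorm_sub_proj // -/m -/W -/D -betaD => bound.
have : enorm x ^+ 2 <= (beta * W) ^+ 2.
  have := sqr_ge0 W; rewrite -(ler_pM2l D_gt0) exprMn; nra.
have BW_ge0 : 0 <= beta * W by apply: mulr_ge0 => //; lra.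
by rewrite ler_pXn2r // nnegrE enorm_ge0.
Qed.

Theorem proposition4p4 (R : realType) (n : nat) (K : set 'rV[R]_n) :
  closed K -> convex_set K -> is_cone K -> pointed K ->
  forall F : set 'rV[R]_n, is_face K F ->
  (exists d : nat, has_dim F d /\ (1 < d)%N) ->
  exists beta : R, 0 < beta /\
    forall x y : 'rV[R]_n, linspan F x -> argmax_unit F x y ->
    forall t : R, 0 <= t ->
      dist (x + t *: y) K <= dist x K /\
      dist x F <= beta * dist (x + t *: y) F.
Proof.
move=> _ Kcvx Kcone _ F KF Fdim.
have Fcone := face_cone Kcone KF; have [_ Fcvx FK _] := KF.
have [beta [beta_gt0 dist_le]] := dist_le_proj Fcone Fdim.
exists beta; split=> // x y _ xy t t_ge0; have [Fy _ _] := xy; split.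
  apply: dist_addr_le; first by exists (t *: y); apply: FK; apply: Fcone.
  move=> k Kk; apply: convex_cone_addr_closed (convex_set_comb Kcvx) Kcone Kk _.
  exact/FK/Fcone.
apply: le_trans (dist_le _ _ xy) _; rewrite ler_pM2l //.
exact: (enorm_proj_le_dist Fcone Fcvx t xy).
Qed.
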